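(* Let $B$ be a Frobenius algebra over $\mathbb{Q}$ and $n\ge0$. Then the algebra $A_n(B)$ is a Frobenius algebra.
   Context: $A_n$ is the nilCoxeter algebra: the unital $\mathbb{Q}$-algebra generated by $Y_1,\dots,Y_{n-1}$ with relations $Y_i^2=0$, $Y_iY_j=Y_jY_i$ for $|i-j|>1$, $Y_iY_{i+1}Y_i=Y_{i+1}Y_iY_{i+1}$; for $w\in S_n$ with reduced expression $w=s_{i_1}\cdots s_{i_r}$, $Y_w=Y_{i_1}\cdots Y_{i_r}$, and $\{Y_w\}_{w\in S_n}$ is a basis of $A_n$. $A_n(B)$ is the semidirect product of $A_n$ and $B^{\otimes n}$: the algebra generated by the subalgebras $A_n$ and $B^{\otimes n}$, with underlying space $A_n\otimes B^{\otimes n}$, subject to $Y_w(b_1\otimes\cdots\otimes b_n)=(b_{w(1)}\otimes\cdots\otimes b_{w(n)})Y_w$ for $w\in S_n$, $b_i\in B$. A Frobenius algebra is a finite-dimensional algebra $C$ with a linear map $\mathrm{tr}:C\to\mathbb{Q}$ such that for every nonzero $y\in C$ there is $y'$ with $\mathrm{tr}(yy')\neq0$. *)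

From HB Require Import structures.
From mathcomp Require Import all_boot all_order all_algebra all_fingroup.
Set Implicit Arguments. Unset Strict Implicit. Unset Printing Implicit Defensive.
Import GRing.Theory.
Local Open Scope ring_scope.

Definition is_Q_algebra (V : vectType rat) (mul : V -> V -> V) (one : V) : Prop :=
  [/\ (forall (a : rat) (x y z : V), mul (a *: x + y) z = a *: mul x z + mul y z),
      (forall (a : rat) (x y z : V), mul z (a *: x + y) = a *: mul z x + mul z y),
      (forall x y z : V, mul x (mul y z) = mul (mul x y) z),
      (forall x : V, mul one x = x) &
      (forall x : V, mul x one = x)].

Definition is_frobenius_algebra (V : vectType rat) (mul : V -> V -> V) (one : V)
  : Prop :=
  is_Q_algebra mul one /\
  exists tr : V -> rat,
    (forall (a : rat) (x y : V), tr (a *: x + y) = a * tr x + tr y) /\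
    (forall y : V, y != 0 -> exists y' : V, tr (mul y y') != 0).

Definition coxeter_length n (w : 'S_n) : nat :=
  #|[set p : 'I_n * 'I_n | (p.1 < p.2)%N && (w p.2 < w p.1)%N]|.

(* ---- The semidirect product A_n(B) ----
   B is a finite-dimensional Q-algebra (V = B, mulB, oneB); we fix the basis
   e = vbasis {:B} of B, so that B^{(x)n} has basis e_alpha = e_{alpha 1} (x) ... (x) e_{alpha n},
   alpha : 'I_n -> 'I_d, and A_n(B) = A_n (x) B^{(x)n} has basis Y_w e_alpha. *)

Definition bdim (B : vectType rat) := \dim (fullv : {vspace B}).

Definition AnB_index (B : vectType rat) (n : nat) : finType :=
  ('S_n * {ffun 'I_n -> 'I_(bdim B)})%type.

(* Underlying vector space: coefficient functions on the basis {Y_w e_alpha}. *)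
Definition AnB (B : vectType rat) (n : nat) : vectType rat :=
  {ffun AnB_index B n -> rat^o}.

Definition strconst (B : vectType rat) (mulB : B -> B -> B)
  (a b k : 'I_(bdim B)) : rat :=
  coord (vbasis fullv) k (mulB (tnth (vbasis fullv) a) (tnth (vbasis fullv) b)).

(* Coefficient of e_gamma in e_alpha * e_beta in B^{(x)n} (componentwise product). *)
Definition tens_const (B : vectType rat) (mulB : B -> B -> B) (n : nat)
  (al be ga : {ffun 'I_n -> 'I_(bdim B)}) : rat :=
  \prod_(i < n) strconst mulB (al i) (be i) (ga i).

(* e_alpha Y_v = Y_v e_{alpha'} with alpha' j = alpha (v^-1 j); this is forced by
   Y_v (b_1 (x) ... (x) b_n) = (b_{v(1)} (x) ... (x) b_{v(n)}) Y_v. *)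
Definition perm_index (B : vectType rat) (n : nat) (v : 'S_n)
  (al : {ffun 'I_n -> 'I_(bdim B)}) : {ffun 'I_n -> 'I_(bdim B)} :=
  [ffun j => al ((v^-1)%g j)].

(* Multiplication:
   (Y_u e_alpha)(Y_v e_beta) = Y_u Y_v e_{alpha'} e_beta,
   Y_u Y_v = Y_{uv} if l(uv) = l(u) + l(v), and 0 otherwise.
   (Products in 'S_n follow MathComp's convention (u * v) x = v (u x), which is the
   one making the stated commutation relation consistent.) *)
Definition AnB_mul (B : vectType rat) (mulB : B -> B -> B) (n : nat)
  (x y : AnB B n) : AnB B n :=
  [ffun p : AnB_index B n =>
     \sum_(q : AnB_index B n) \sum_(r : AnB_index B n)
       if (q.1 * r.1 == p.1)%g &&
          (coxeter_length (q.1 * r.1)%g == coxeter_length q.1 + coxeter_length r.1)%N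
       then x q * y r * tens_const mulB (perm_index r.1 q.2) r.2 p.2
       else 0].

Definition AnB_one (B : vectType rat) (oneB : B) (n : nat) : AnB B n :=
  [ffun p : AnB_index B n =>
     if p.1 == 1%g then \prod_(i < n) coord (vbasis fullv) (p.2 i) oneB else 0].

From HB Require Import structures.
From mathcomp Require Import all_boot all_order all_algebra all_fingroup.
From mathcomp Require Import zify ring.
Set Implicit Arguments. Unset Strict Implicit. Unset Printing Implicit Defensive.

(* In the basis Y_w e_a of A_n(B) the product is
     (Y_u e_a) (Y_v e_b) = [l(uv) = l(u) + l(v)] Y_uv e_(a o v^-1) e_b,
   so A_n(B) is associative with unit Y_1 (1 (x) ... (x) 1): additivity of the
   length is an associative condition because the inversion count is
   subadditive, and the componentwise structure constants of B^(x)n inherit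
   associativity and unit from B.  The Frobenius form reads off the coefficient
   of Y_w0, w0 the longest permutation, and applies tr_B in every tensor factor.
   Since l(w0) = l(u) + l(u^-1 w0) for every u, pairing y with Y_(u^-1 w0) e_g
   pairs the Y_u-coefficients of y against the n-th tensor power of the Gram
   matrix of tr_B, which is invertible because tr_B is nondegenerate. *)

Section CoxeterLength.
Variable n : nat.
Implicit Types u v w : 'S_n.
Local Notation L := (@coxeter_length n).

Definition inversions w : {set 'I_n * 'I_n} :=
  [set p : 'I_n * 'I_n | (p.1 < p.2) && (w p.2 < w p.1)].

Lemma coxeter_lengthE w : L w = #|inversions w|.
Proof. by []. Qed.

Lemma coxeter_length1 : L 1 = 0.
Proof.
rewrite coxeter_lengthE; apply/eqP; rewrite cards_eq0; apply/eqP/setP => -[i j].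
by rewrite !inE /= !perm1; case: ltngtP.
Qed.

(* An inversion (i, j) of u * v, which maps i to v (u i), is an inversion of u
   unless (u i, u j) is an inversion of v. *)
Lemma coxeter_lengthM_le u v : L (u * v) <= L u + L v.
Proof.
rewrite !coxeter_lengthE.
pose g (p : 'I_n * 'I_n) := (u p.1, u p.2).
have g_inj : injective g by move=> [a b] [c d] [/perm_inj -> /perm_inj ->].
rewrite -(card_preimset (inversions v) g_inj).
apply: leq_trans (leq_card_setU _ _); apply: subset_leq_card.
apply/subsetP => -[i j]; rewrite !inE /= !permM => /andP[ij vu].
rewrite /g /= ij vu andbT /=; case: ltngtP => // uij.
by move: vu; rewrite (val_inj uij) ltnn.
Qed.

Definition length_add u v := L (u * v) == L u + L v.

Lemma length_addA u v w :
  length_add u v && length_add (u * v) w = length_add v w && length_add u (v * w).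
Proof.
have uvw : L (u * (v * w)) = L (u * v * w) by rewrite mulgA.
have := coxeter_lengthM_le u (v * w); have := coxeter_lengthM_le v w.
have := coxeter_lengthM_le (u * v) w; have := coxeter_lengthM_le u v.
rewrite /length_add uvw => h1 h2 h3 h4.
by apply/idP/idP => /andP[/eqP e1 /eqP e2]; apply/andP; split; apply/eqP; lia.
Qed.

Lemma length_add1g u : length_add 1 u.
Proof. by rewrite /length_add mul1g coxeter_length1. Qed.

Lemma length_addg1 u : length_add u 1.
Proof. by rewrite /length_add mulg1 coxeter_length1 addn0. Qed.

Definition longest_perm : 'S_n := perm (can_inj (@rev_ordK n)).

Lemma longest_permE : longest_perm =1 @rev_ord n.
Proof. exact: permE. Qed.

(* longest_perm inverts every increasing pair, and the inversions of u are
   disjoint from the u^-1-images of the inversions of u^-1 * longest_perm,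
   which are increasing pairs too. *)
Lemma length_add_longest u : length_add u (u^-1 * longest_perm).
Proof.
set w0 := longest_perm; set v := (u^-1 * w0)%g.
have inv_w0 : inversions w0 = [set p : 'I_n * 'I_n | p.1 < p.2].
  apply/setP => -[i j]; rewrite !inE /= !longest_permE /=.
  by have := ltn_ord i; have := ltn_ord j; case: (ltnP i j) => //=; lia.
rewrite /length_add /v mulKVg eqn_leq -{1}(mulKVg u w0) coxeter_lengthM_le /=.
pose f (p : 'I_n * 'I_n) := ((u^-1)%g p.1, (u^-1)%g p.2).
have f_inj : injective f by move=> [a b] [c d] [/perm_inj -> /perm_inj ->].
rewrite !coxeter_lengthE -(card_imset (inversions v) f_inj).
have /leqifP := leq_card_setU (inversions u) (f @: inversions v).
case: ifP => [_ /eqP <-|/negbT]; last first.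
  case/pred0Pn => -[i j] /andP[]; rewrite !inE /= => /andP[ij uji].
  case/imsetP => -[a b]; rewrite !inE /= !permM => /andP[ab _] [ia jb].
  by move: uji; rewrite ia jb !permKV => /(ltn_trans ab); rewrite ltnn.
apply: subset_leq_card; apply/subsetP => -[i j]; rewrite inv_w0 !inE /=.
case/orP => [/andP[] //|/imsetP[[a b]]].
rewrite !inE /= !permM !longest_permE /= => /andP[ab ba] [-> ->].
by have := ltn_ord ((u^-1)%g a); have := ltn_ord ((u^-1)%g b); move: ba; lia.
Qed.

End CoxeterLength.

Import GRing.Theory.
Local Open Scope ring_scope.

Lemma sum_mul_delta (I : finType) (R : pzSemiRingType) (F : I -> R) j :
  \sum_i F i * (i == j)%:R = F j.
Proof.
by rewrite (bigD1 j) //= eqxx mulr1 big1 ?addr0 // => i /negbTE ->; rewrite mulr0.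
Qed.

Lemma sum_pair_fst (I J : finType) (R : nmodType) (F : I * J -> R) i0 :
  (forall t, t.1 != i0 -> F t = 0) -> \sum_t F t = \sum_j F (i0, j).
Proof.
move=> F0; transitivity (\sum_t F (t.1, t.2)); first by apply: eq_bigr => -[].
rewrite -(pair_bigA _ (fun i j => F (i, j))) (bigD1 i0) //=.
by rewrite [X in _ + X]big1 ?addr0 // => i ne; apply: big1 => j _; exact: F0.
Qed.

Lemma sum_if_mul (I : finType) (R : pzSemiRingType) (b c : bool) (F G : I -> R) :
  \sum_i (if b then F i else 0) * (if c then G i else 0) =
  if b && c then \sum_i F i * G i else 0.
Proof. by case: b; case: c => //=; rewrite big1 // => i _; rewrite ?mulr0 ?mul0r. Qed.

Lemma prod_eq_ffun (I : finType) (T : eqType) (R : comPzSemiRingType)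
    (f g : {ffun I -> T}) :
  \prod_i ((f i == g i)%:R : R) = (f == g)%:R.
Proof.
have [->|neq] := eqVneq f g; first by apply: big1 => i _; rewrite eqxx.
have [i /negbTE fgi] : exists i, f i != g i.
  apply/existsP; apply: contraNT neq => /existsPn fg.
  by apply/eqP/ffunP => i; apply/eqP/negPn.
by rewrite (bigD1 i) //= fgi mul0r.
Qed.

Lemma sum_ffun_prod_mul (I J : finType) (R : comPzSemiRingType) (F G : I -> J -> R) :
  \sum_(f : {ffun I -> J}) (\prod_i F i (f i)) * \prod_i G i (f i) =
  \prod_i \sum_j F i j * G i j.
Proof. by rewrite bigA_distr_bigA; apply: eq_bigr => f _; rewrite big_split. Qed.

Section StructureConstants.
Variables (I : finType) (k : I -> I -> I -> rat).
Variables (mul : {ffun I -> rat^o} -> {ffun I -> rat^o} -> {ffun I -> rat^o}).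
Variable one : {ffun I -> rat^o}.
Hypothesis mulE : forall x y p, mul x y p = \sum_q \sum_r x q * y r * k q r p.
Hypothesis constA :
  forall q r' r p, \sum_t k q r' t * k t r p = \sum_s k r' r s * k q s p.
Hypothesis const1l : forall r p, \sum_q one q * k q r p = (r == p)%:R.
Hypothesis const1r : forall q p, \sum_r one r * k q r p = (q == p)%:R.

Lemma const_mulA : associative mul.
Proof.
move=> x y z; apply/ffunP => p.
transitivity (\sum_q \sum_r' \sum_r \sum_s x q * y r' * z r * (k r' r s * k q s p)).
  rewrite mulE; apply: eq_bigr => q _.
  transitivity (\sum_s \sum_r' \sum_r x q * y r' * z r * (k r' r s * k q s p)).
    apply: eq_bigr => s _; rewrite mulE mulr_sumr mulr_suml; apply: eq_bigr => r' _.
    by rewrite mulr_sumr mulr_suml; apply: eq_bigr => r _; ring.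
  by rewrite exchange_big; apply: eq_bigr => r' _; rewrite exchange_big.
transitivity (\sum_q \sum_r' \sum_r \sum_t x q * y r' * z r * (k q r' t * k t r p)).
  by do 3![apply: eq_bigr => ? _]; rewrite -!mulr_sumr constA.
transitivity (\sum_r \sum_t \sum_q \sum_r' x q * y r' * z r * (k q r' t * k t r p)).
  transitivity (\sum_q \sum_r \sum_t \sum_r' x q * y r' * z r * (k q r' t * k t r p)).
    apply: eq_bigr => q _; rewrite exchange_big; apply: eq_bigr => r _.
    exact: exchange_big.
  by rewrite exchange_big; apply: eq_bigr => r _; rewrite exchange_big.
rewrite mulE exchange_big; apply: eq_bigr => r _; apply: eq_bigr => t _.
rewrite mulE !mulr_suml; apply: eq_bigr => q _; rewrite !mulr_suml.
by apply: eq_bigr => r' _; ring.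
Qed.

Lemma is_Q_algebra_const : is_Q_algebra mul one.
Proof.
split; last 3 first.
- exact: const_mulA.
- move=> x; apply/ffunP => p; rewrite mulE exchange_big -[RHS](sum_mul_delta x).
  apply: eq_bigr => r _; rewrite -const1l mulr_sumr.
  by apply: eq_bigr => q _; ring.
- move=> x; apply/ffunP => p; rewrite mulE -[RHS](sum_mul_delta x).
  apply: eq_bigr => q _; rewrite -const1r mulr_sumr.
  by apply: eq_bigr => r _; ring.
all: move=> a x y z; apply/ffunP => p; rewrite !ffunE !mulE /GRing.scale /=.
all: rewrite mulr_sumr -big_split; apply: eq_bigr => q _.
all: rewrite mulr_sumr -big_split; apply: eq_bigr => r _.
all: by rewrite !ffunE /GRing.scale /=; ring.
Qed.

End StructureConstants.

Section SemidirectProduct.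
Variables (B : vectType rat) (mulB : B -> B -> B) (oneB : B).
Hypothesis mulB_linear_l :
  forall (a : rat) (x y z : B), mulB (a *: x + y) z = a *: mulB x z + mulB y z.
Hypothesis mulB_linear_r :
  forall (a : rat) (x y z : B), mulB z (a *: x + y) = a *: mulB z x + mulB z y.
Hypothesis mulBA : forall x y z : B, mulB x (mulB y z) = mulB (mulB x y) z.
Hypothesis mul1B : forall x : B, mulB oneB x = x.
Hypothesis mulB1 : forall x : B, mulB x oneB = x.

Local Notation d := (bdim B).
Local Notation X := (vbasis (fullv : {vspace B})).
Local Notation e i := (tnth X i).
Local Notation c := (strconst mulB).

Let mulBl z : {linear B -> B} := HB.pack (mulB^~ z)
  (GRing.isLinear.Build rat B B *:%R (mulB^~ z) (fun a x y => mulB_linear_l a x y z)).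
Let mulBr z : {linear B -> B} := HB.pack (mulB z)
  (GRing.isLinear.Build rat B B *:%R (mulB z) (fun a x y => mulB_linear_r a x y z)).

Lemma mulB_suml (I : finType) (F : I -> B) z :
  mulB (\sum_i F i) z = \sum_i mulB (F i) z.
Proof. exact: (linear_sum (mulBl z)). Qed.

Lemma mulB_sumr (I : finType) (F : I -> B) z :
  mulB z (\sum_i F i) = \sum_i mulB z (F i).
Proof. exact: (linear_sum (mulBr z)). Qed.

Lemma mulBZl a x z : mulB (a *: x) z = a *: mulB x z.
Proof. exact: (linearZ_LR (mulBl z)). Qed.

Lemma mulBZr a x z : mulB z (a *: x) = a *: mulB z x.
Proof. exact: (linearZ_LR (mulBr z)). Qed.

Lemma vbasis_expand (v : B) : v = \sum_i coord X i v *: e i.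
Proof.
by rewrite {1}(coord_vbasis (memvf v)); apply: eq_bigr => i _; rewrite (tnth_nth 0).
Qed.

Lemma coord_vbasis_tnth (i j : 'I_d) : coord X j (e i) = (i == j)%:R.
Proof. by rewrite (tnth_nth 0) coord_free // (basis_free (vbasisP fullv)). Qed.

Lemma strconstE i j : mulB (e i) (e j) = \sum_k c i j k *: e k.
Proof. exact: vbasis_expand. Qed.

Lemma strconstA i j k l : \sum_m c i j m * c m k l = \sum_m c j k m * c i m l.
Proof.
have -> : \sum_m c i j m * c m k l = coord X l (mulB (mulB (e i) (e j)) (e k)).
  rewrite strconstE mulB_suml linear_sum; apply: eq_bigr => m _.
  by rewrite mulBZl linearZ.
have -> : \sum_m c j k m * c i m l = coord X l (mulB (e i) (mulB (e j) (e k))).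
  rewrite (strconstE j) mulB_sumr linear_sum; apply: eq_bigr => m _.
  by rewrite mulBZr linearZ.
by rewrite mulBA.
Qed.

Lemma strconst1l j l : \sum_i coord X i oneB * c i j l = (j == l)%:R.
Proof.
rewrite -coord_vbasis_tnth -{1}(mul1B (e j)) [in RHS](vbasis_expand oneB).
by rewrite mulB_suml linear_sum; apply: eq_bigr => i _; rewrite mulBZl linearZ.
Qed.

Lemma strconst1r i l : \sum_j c i j l * coord X j oneB = (i == l)%:R.
Proof.
rewrite -coord_vbasis_tnth -{1}(mulB1 (e i)) [in RHS](vbasis_expand oneB).
rewrite mulB_sumr linear_sum; apply: eq_bigr => j _.
by rewrite mulBZr linearZ mulrC.
Qed.

Variable n : nat.
Local Notation J := {ffun 'I_n -> 'I_d}.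
Local Notation T := (@tens_const B mulB n).
Local Notation pidx := (@perm_index B n).

Definition one_tens (g : J) : rat := \prod_i coord X (g i) oneB.

Lemma tens_constA a b f m :
  \sum_g T a b g * T g f m = \sum_g T b f g * T a g m.
Proof.
rewrite (sum_ffun_prod_mul (fun i => c (a i) (b i)) (fun i k => c k (f i) (m i))).
rewrite (sum_ffun_prod_mul (fun i => c (b i) (f i)) (fun i k => c (a i) k (m i))).
by apply: eq_bigr => i _; apply: strconstA.
Qed.

Lemma tens_const1l b m : \sum_g one_tens g * T g b m = (b == m)%:R.
Proof.
rewrite -prod_eq_ffun.
rewrite (sum_ffun_prod_mul (fun _ k => coord X k oneB) (fun i k => c k (b i) (m i))).
by apply: eq_bigr => i _; apply: strconst1l.
Qed.

Lemma tens_const1r a m : \sum_g T a g m * one_tens g = (a == m)%:R.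
Proof.
rewrite -prod_eq_ffun.
rewrite (sum_ffun_prod_mul (fun i k => c (a i) k (m i)) (fun _ k => coord X k oneB)).
by apply: eq_bigr => i _; apply: strconst1r.
Qed.

Lemma perm_indexM (v w : 'S_n) a : pidx (v * w) a = pidx w (pidx v a).
Proof. by apply/ffunP => j; rewrite !ffunE invMg permM. Qed.

Lemma perm_index1 a : pidx 1 a = a.
Proof. by apply/ffunP => j; rewrite !ffunE invg1 perm1. Qed.

Lemma perm_indexK (v : 'S_n) : cancel (pidx v) (pidx v^-1).
Proof. by move=> a; rewrite -perm_indexM mulgV perm_index1. Qed.

Lemma perm_index_inj (v : 'S_n) : injective (pidx v).
Proof. exact: can_inj (perm_indexK v). Qed.

Lemma tens_const_perm (v : 'S_n) a b g : T (pidx v a) (pidx v b) (pidx v g) = T a b g.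
Proof.
rewrite /tens_const [RHS](reindex_inj (@perm_inj _ v^-1)).
by apply: eq_bigr => i _; rewrite !ffunE.
Qed.

Lemma one_tens_perm (v : 'S_n) g : one_tens (pidx v g) = one_tens g.
Proof.
rewrite /one_tens [RHS](reindex_inj (@perm_inj _ v^-1)).
by apply: eq_bigr => i _; rewrite !ffunE.
Qed.

Local Notation I := (AnB_index B n).

Definition anb_const (q r p : I) : rat :=
  if (q.1 * r.1 == p.1)%g && length_add q.1 r.1 then T (pidx r.1 q.2) r.2 p.2 else 0.

Lemma AnB_mulE x y p :
  AnB_mul mulB x y p = \sum_q \sum_r x q * y r * anb_const q r p.
Proof.
rewrite ffunE; apply: eq_bigr => q _; apply: eq_bigr => r _.
by rewrite /anb_const /length_add; case: ifP; rewrite ?mulr0.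
Qed.

Lemma anb_constA q r' r p :
  \sum_t anb_const q r' t * anb_const t r p = \sum_s anb_const r' r s * anb_const q s p.
Proof.
rewrite (sum_pair_fst (i0 := (q.1 * r'.1)%g)) => [|t]; last first.
  by rewrite /anb_const eq_sym => /negbTE ->; rewrite mul0r.
rewrite [RHS](sum_pair_fst (i0 := (r'.1 * r.1)%g)) => [|t]; last first.
  by rewrite /anb_const eq_sym => /negbTE ->; rewrite mul0r.
rewrite /anb_const /= !eqxx /= !sum_if_mul -mulgA andbCA [in RHS]andbCA length_addA.
case: ifP => // _.
transitivity (\sum_g T (pidx (r'.1 * r.1) q.2) (pidx r.1 r'.2) g * T g r.2 p.2).
  rewrite [RHS](reindex_inj (@perm_index_inj r.1)); apply: eq_bigr => g _.
  by rewrite perm_indexM tens_const_perm.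
by rewrite tens_constA.
Qed.

Lemma AnB_oneE q : AnB_one oneB n q = if q.1 == 1%g then one_tens q.2 else 0.
Proof. by rewrite ffunE. Qed.

Lemma anb_const1l r p : \sum_q AnB_one oneB n q * anb_const q r p = (r == p)%:R.
Proof.
rewrite (sum_pair_fst (i0 := 1%g)) => [|q]; last first.
  by rewrite AnB_oneE => /negbTE ->; rewrite mul0r.
case: r p => [v b] [w m]; rewrite xpair_eqE.
under eq_bigr => g _ do rewrite AnB_oneE /anb_const /= mul1g length_add1g eqxx andbT.
case: eqP => _ /=; last by rewrite big1 // => g _; rewrite mulr0.
rewrite -tens_const1l [RHS](reindex_inj (@perm_index_inj v)).
by apply: eq_bigr => g _; rewrite one_tens_perm.
Qed.

Lemma anb_const1r q p : \sum_r AnB_one oneB n r * anb_const q r p = (q == p)%:R.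
Proof.
rewrite (sum_pair_fst (i0 := 1%g)) => [|r]; last first.
  by rewrite AnB_oneE => /negbTE ->; rewrite mul0r.
case: q p => [v a] [w m]; rewrite xpair_eqE.
under eq_bigr => g _
  do rewrite AnB_oneE /anb_const /= mulg1 length_addg1 eqxx andbT perm_index1.
case: eqP => _ /=; last by rewrite big1 // => g _; rewrite mulr0.
by rewrite -tens_const1r; apply: eq_bigr => g _; rewrite mulrC.
Qed.

Lemma AnB_Q_algebra : is_Q_algebra (@AnB_mul B mulB n) (AnB_one oneB n).
Proof. exact: is_Q_algebra_const AnB_mulE anb_constA anb_const1l anb_const1r. Qed.

Variable tr : B -> rat.
Hypothesis tr_linear : forall (a : rat) (x y : B), tr (a *: x + y) = a * tr x + tr y.
Hypothesis tr_nondeg : forall y : B, y != 0 -> exists y' : B, tr (mulB y y') != 0.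
HB.instance Definition _ := GRing.isLinear.Build rat B rat *%R tr tr_linear.

Definition gram : 'M[rat]_d := \matrix_(i, j) tr (mulB (e i) (e j)).

Lemma tr_mul_comb (u : 'rV[rat]_d) y :
  tr (mulB (\sum_i u 0 i *: e i) y) = \sum_j (u *m gram) 0 j * coord X j y.
Proof.
rewrite mulB_suml linear_sum.
transitivity (\sum_i \sum_j u 0 i * gram i j * coord X j y).
  apply: eq_bigr => i _; rewrite mulBZl linearZ {1}(vbasis_expand y) mulB_sumr.
  rewrite linear_sum /= mulr_sumr; apply: eq_bigr => j _.
  by rewrite mulBZr linearZ mxE /=; ring.
rewrite exchange_big; apply: eq_bigr => j _.
by rewrite mxE mulr_suml.
Qed.

Lemma gram_unit : gram \in unitmx.
Proof.
rewrite -row_free_unit -kermx_eq0; apply/rowV0P => u /sub_kermxP u_gram.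
have comb0 : \sum_i u 0 i *: e i = 0.
  apply/eqP; apply: contraT => /tr_nondeg[y].
  by rewrite tr_mul_comb u_gram big1 ?eqxx // => j _; rewrite mxE mul0r.
apply/rowP => j; rewrite mxE -[RHS](linear0 (coord X j)) -comb0 linear_sum.
rewrite -[LHS](sum_mul_delta (u 0)); apply: eq_bigr => i _.
by rewrite linearZ /= coord_vbasis_tnth.
Qed.

Definition tr_tens (g : J) : rat := \prod_i tr (e (g i)).
Definition gram_tens (a g : J) : rat := \prod_i gram (a i) (g i).

Lemma tens_const_tr a g : \sum_m T a g m * tr_tens m = gram_tens a g.
Proof.
rewrite (sum_ffun_prod_mul (fun i => c (a i) (g i)) (fun _ k => tr (e k))).
apply: eq_bigr => i _; rewrite mxE strconstE linear_sum.
by apply: eq_bigr => k _; rewrite linearZ.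
Qed.

Lemma gram_tens_perm (v : 'S_n) a g : gram_tens (pidx v a) (pidx v g) = gram_tens a g.
Proof.
rewrite /gram_tens [RHS](reindex_inj (@perm_inj _ v^-1)).
by apply: eq_bigr => i _; rewrite !ffunE.
Qed.

Lemma gram_tensK (a b : J) :
  \sum_g gram_tens a g * \prod_i invmx gram (g i) (b i) = (a == b)%:R.
Proof.
rewrite -prod_eq_ffun.
rewrite (sum_ffun_prod_mul (fun i => gram (a i)) (fun i k => invmx gram k (b i))).
apply: eq_bigr => i _.
by have /matrixP/(_ (a i) (b i)) := mulmxV gram_unit; rewrite !mxE.
Qed.

Lemma gram_tens_row_eq0 (z : J -> rat) :
  (forall g, \sum_a z a * gram_tens a g = 0) -> forall a, z a = 0.
Proof.
move=> z_gram b; rewrite -[LHS](sum_mul_delta z).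
transitivity (\sum_g (\sum_a z a * gram_tens a g) * \prod_i invmx gram (g i) (b i)).
  under eq_bigr => a _ do rewrite -gram_tensK mulr_sumr.
  rewrite exchange_big; apply: eq_bigr => g _; rewrite mulr_suml.
  by apply: eq_bigr => a _; rewrite mulrA.
by rewrite big1 // => g _; rewrite z_gram mul0r.
Qed.

Local Notation w0 := (longest_perm n).

Definition AnB_tr (x : AnB B n) : rat := \sum_g x (w0, g) * tr_tens g.

Definition AnB_basis (q : I) : AnB B n := [ffun p => (p == q)%:R].

Lemma AnB_tr_linear a x y : AnB_tr (a *: x + y) = a * AnB_tr x + AnB_tr y.
Proof.
rewrite /AnB_tr mulr_sumr -big_split; apply: eq_bigr => g _.
by rewrite !ffunE /GRing.scale /=; ring.
Qed.

Lemma AnB_tr_mul_basis y u g :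
  AnB_tr (AnB_mul mulB y (AnB_basis ((u^-1 * w0)%g, pidx (u^-1 * w0)%g g))) =
  \sum_a y (u, a) * gram_tens a g.
Proof.
set v := (u^-1 * w0)%g.
have v_eq s : (s * v == w0)%g = (s == u).
  by rewrite -{1}(mulKVg u w0) -/v (inj_eq (mulIg v)).
have mul_basis m : AnB_mul mulB y (AnB_basis (v, pidx v g)) (w0, m) =
    \sum_a y (u, a) * T (pidx v a) (pidx v g) m.
  transitivity (\sum_q y q * anb_const q (v, pidx v g) (w0, m)).
    rewrite AnB_mulE; apply: eq_bigr => q _.
    rewrite -[RHS](sum_mul_delta (fun r => y q * anb_const q r (w0, m))).
    by apply: eq_bigr => r _; rewrite ffunE; ring.
  rewrite (sum_pair_fst (i0 := u)) => [|q]; last first.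
    by rewrite /anb_const /= v_eq => /negbTE ->; rewrite mulr0.
  by apply: eq_bigr => a _; rewrite /anb_const /= v_eq eqxx length_add_longest.
rewrite /AnB_tr; under eq_bigr => m _ do rewrite mul_basis mulr_suml.
rewrite exchange_big; apply: eq_bigr => a _.
rewrite -(gram_tens_perm v) -tens_const_tr mulr_sumr.
by apply: eq_bigr => m _; rewrite mulrA.
Qed.

Lemma AnB_tr_nondeg y : y != 0 -> exists y', AnB_tr (AnB_mul mulB y y') != 0.
Proof.
move=> y_neq0; have [[u a] yua] : exists p, y p != 0.
  apply/existsP; apply: contraNT y_neq0 => /existsPn y0.
  by apply/eqP/ffunP => p; rewrite ffunE; apply/eqP/negPn; exact: y0.
set v := (u^-1 * w0)%g.
have [g tr_neq0] : exists g, AnB_tr (AnB_mul mulB y (AnB_basis (v, pidx v g))) != 0.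
  apply/existsP; apply: contraNT yua => /existsPn tr0; apply/eqP.
  apply: (gram_tens_row_eq0 (z := fun b => y (u, b))) => g.
  by rewrite -AnB_tr_mul_basis; apply/eqP/negPn; exact: tr0.
by exists (AnB_basis (v, pidx v g)).
Qed.

End SemidirectProduct.

Theorem mainTheorem17 (B : vectType rat) (mulB : B -> B -> B) (oneB : B) (n : nat) :
  is_frobenius_algebra mulB oneB ->
  is_frobenius_algebra (@AnB_mul B mulB n) (AnB_one oneB n).
Proof.
move=> [[mulB_linear_l mulB_linear_r mulBA mul1B mulB1] [tr [tr_linear tr_nondeg]]].
split; first exact: AnB_Q_algebra.
exists (AnB_tr tr); split; first exact: AnB_tr_linear.
move=> y; exact: AnB_tr_nondeg.
Qed.
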